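(* Let $\Gamma$ be a distance-regular graph with diameter $D\ge3$ and intersection number $a_1\ne0$. Let $\sigma_0,\dots,\sigma_D$ and $\rho_0,\dots,\rho_D$ be nontrivial pseudo cosine sequences forming a tight pair, and let $\varepsilon$ be the corresponding auxiliary parameter. Then $\varepsilon\notin\{1,-1\}$, and $\sigma_{i-1}\ne\sigma_i$ and $\rho_{i-1}\ne\rho_i$ for $1\le i\le D$.
   Context: $\Gamma$ is a finite connected undirected graph without loops or multiple edges, distance-regular with diameter $D$, intersection numbers $a_i,b_i,c_i$ ($c_0=0$, $b_D=0$), valency $k$, $c_i+a_i+b_i=k$. For $\theta\in\mathbb{R}$ the pseudo cosine sequence for $\theta$ is the sequence of reals $\sigma_0,\dots,\sigma_D$ with $\sigma_0=1$ and $c_i\sigma_{i-1}+a_i\sigma_i+b_i\sigma_{i+1}=\theta\sigma_i$ for $0\le i\le D-1$; nontrivial means $\sigma_1\ne1$. Pseudo cosine sequences $\sigma_i$, $\rho_i$ form a tight pair if $(\sigma_i\rho_i)_{i=0}^D$ is a pseudo cosine sequence. For a tight pair of nontrivial pseudo cosine sequences, an auxiliary parameter is a real $\varepsilon$ with $\sigma_i\rho_i-\sigma_{i-1}\rho_{i-1}=\varepsilon(\sigma_{i-1}\rho_i-\sigma_i\rho_{i-1})$ for $1\le i\le D$ (if $\sigma_1\ne\rho_1$ it is unique, equal to $(\sigma_1\rho_1-1)/(\rho_1-\sigma_1)$). *)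

From HB Require Import structures.
From mathcomp Require Import all_boot all_order all_algebra.
From mathcomp Require Import reals.
Set Implicit Arguments. Unset Strict Implicit. Unset Printing Implicit Defensive.
Import Order.TTheory GRing.Theory Num.Theory.
Local Open Scope ring_scope.

Fixpoint within (T : finType) (adj : rel T) (n : nat) (x y : T) : bool :=
  match n with
  | 0 => x == y
  | n'.+1 => within adj n' x y || [exists z, adj x z && within adj n' z y]
  end.

Definition connected_graph (T : finType) (adj : rel T) : Prop :=
  forall x y : T, exists n, within adj n x y.

(* Path-length distance: least n with a walk of length <= n
   (in a connected graph this is attained below #|T|). *)
Definition gdist (T : finType) (adj : rel T) (x y : T) : nat :=
  find (fun n => within adj n x y) (iota 0 #|T|).

Definition diameter (T : finType) (adj : rel T) : nat :=
  (\max_(x : T) \max_(y : T) gdist adj x y)%N.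

Definition distance_regular (T : finType) (adj : rel T) (D : nat)
    (a b c : nat -> nat) : Prop :=
  [/\ symmetric adj, irreflexive adj, connected_graph adj,
      diameter adj = D &
      forall x y : T, let i := gdist adj x y in
        [/\ #|[set z | adj y z & (gdist adj x z).+1 == i]| = c i,
            #|[set z | adj y z & gdist adj x z == i]| = a i &
            #|[set z | adj y z & gdist adj x z == i.+1]| = b i]].

(* Pseudo cosine sequence for theta (only sigma_0..sigma_D matter). *)
Definition pseudo_cosine (R : realType) (D : nat) (a b c : nat -> nat)
    (theta : R) (sigma : nat -> R) : Prop :=
  sigma 0%N = 1 /\
  forall i : nat, (i <= D.-1)%N ->
    (c i)%:R * sigma i.-1 + (a i)%:R * sigma i + (b i)%:R * sigma i.+1
      = theta * sigma i.

Definition is_pseudo_cosine (R : realType) (D : nat) (a b c : nat -> nat)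
    (sigma : nat -> R) : Prop :=
  exists theta : R, pseudo_cosine D a b c theta sigma.

Definition nontrivial (R : realType) (sigma : nat -> R) : Prop := sigma 1%N <> 1.

Definition tight_pair (R : realType) (D : nat) (a b c : nat -> nat)
    (sigma rho : nat -> R) : Prop :=
  [/\ is_pseudo_cosine D a b c sigma, is_pseudo_cosine D a b c rho &
      is_pseudo_cosine D a b c (fun i => sigma i * rho i)].

Definition auxiliary_parameter (R : realType) (D : nat)
    (sigma rho : nat -> R) (eps : R) : Prop :=
  forall i : nat, (1 <= i <= D)%N ->
    sigma i * rho i - sigma i.-1 * rho i.-1
      = eps * (sigma i.-1 * rho i - sigma i * rho i.-1).

From HB Require Import structures.
From mathcomp Require Import all_boot all_order all_algebra.
From mathcomp Require Import reals.
From mathcomp Require Import ring lra zify.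
Import Order.TTheory GRing.Theory Num.Theory.
Set Implicit Arguments. Unset Strict Implicit. Unset Printing Implicit Defensive.

(* Write k = b_0.  In a distance-regular graph c_j > 0, b_j > 0 and
   c_j + a_j + b_j = k for 0 < j < D, and a pseudo cosine sequence is the
   solution of the three-term recurrence with theta = k sigma_1.  Hence no
   pseudo cosine sequence vanishes at two consecutive indices, and a
   nontrivial one is never constant on three consecutive indices.

   If eps = 1 then (sigma_i - sigma_{i-1}) (rho_i + rho_{i-1}) = 0 for all i.
   At i = 1 this gives rho_1 = -1, whence b_1 (rho_2 - 1) = 2 a_1 > 0; so
   rho_2 > 1 and i = 2 gives sigma_2 = sigma_1.  At i = 3 either sigma is
   constant on 1, 2, 3, or rho_3 = -rho_2, which forces
   (2 a_2 + c_2) rho_2 = c_2 and rho_2 <= 1.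

   If eps <> 1 and sigma_j = sigma_{j+1}, the auxiliary relation forces
   rho_j = rho_{j+1}, and comparing the recurrences at j for sigma, rho and
   sigma rho yields k (a_j + b_j) (sigma_1 - 1) (rho_1 - 1) sigma_j rho_j = 0.
   Exchanging sigma and rho replaces eps by -eps, which gives eps <> -1 and
   the statement for rho. *)

Section Walks.
Variables (T : finType) (adj : rel T).

Lemma withinP n x y :
  reflect (exists2 p, path adj x p & (last x p == y) && (size p <= n))
          (within adj n x y).
Proof.
elim: n x => [|n IHn] x /=.
  apply: (iffP eqP) => [<-|[p _]]; first by exists [::]; rewrite /= ?eqxx.
  by case: p => [/andP [/eqP]|z p] //=; rewrite ltn0 andbF.
apply: (iffP orP) => [[/IHn [p xp /andP [px sp]]|/existsP [z /andP [xz]]]|].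
- by exists p; rewrite ?px ?(leqW sp).
- by case/IHn => p zp /andP [pz sp]; exists (z :: p); rewrite /= ?xz ?pz.
case=> [[|z p]] /=.
  by move=> _ /andP [xy _]; left; apply/IHn; exists [::]; rewrite //= xy.
move=> /andP [xz zp] /andP [pz sp]; right; apply/existsP; exists z.
by rewrite xz; apply/IHn; exists p; rewrite ?pz.
Qed.

Lemma within_shorten n x y : within adj n x y -> within adj #|T|.-1 x y.
Proof.
case/withinP => p xp /andP [+ _]; case: (shortenP xp) => p' xp' uniq_p' _ p'y.
apply/withinP; exists p'; rewrite // p'y -ltnS.
by have := max_card (mem (x :: p')); rewrite (card_uniqP uniq_p') /=; lia.
Qed.

Lemma gdist_le n x y : within adj n x y -> gdist adj x y <= n.
Proof.
move=> xy; rewrite /gdist; case: (ltnP n #|T|) => [ltnT|leTn].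
  by rewrite leqNgt; apply/negP => /(before_find 0); rewrite nth_iota // xy.
by rewrite (leq_trans (find_size _ _)) // size_iota.
Qed.

Lemma gdist_self x : gdist adj x x = 0.
Proof. by apply/eqP; rewrite -leqn0 (@gdist_le 0) //= eqxx. Qed.

Lemma diameter_witness : 0 < diameter adj -> exists x y, gdist adj x y = diameter adj.
Proof.
case: (pickP (fun _ : T => true)) => [x0 _|none]; last by rewrite /diameter big_pred0.
have T_gt0 : 0 < #|T| by apply/card_gt0P; exists x0.
rewrite /diameter; have [x ->] := bigop.eq_bigmax (fun x => \max_y gdist adj x y) T_gt0.
by have [y ->] := bigop.eq_bigmax (gdist adj x) T_gt0; exists x, y.
Qed.

Hypothesis adj_connected : connected_graph adj.

Lemma within_gdist x y : within adj (gdist adj x y) x y.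
Proof.
have [n /within_shorten xy] := adj_connected x y.
have T_gt0 : 0 < #|T| by apply/card_gt0P; exists x.
have has_xy : has (fun n => within adj n x y) (iota 0 #|T|).
  by apply/hasP; exists #|T|.-1; rewrite // mem_iota; lia.
have := nth_find 0 has_xy; rewrite nth_iota //.
by rewrite -[X in _ < X](size_iota 0) -has_find.
Qed.

Lemma gdist_adj x y z : adj y z -> gdist adj x z <= (gdist adj x y).+1.
Proof.
move=> yz; have /withinP [p xp /andP [/eqP py sp]] := within_gdist x y.
apply: gdist_le; apply/withinP; exists (rcons p z).
  by rewrite rcons_path xp py.
by rewrite last_rcons eqxx size_rcons.
Qed.

Lemma gdist_eq0 x y : (gdist adj x y == 0) = (x == y).
Proof.
apply/idP/eqP => [/eqP xy0|<-]; last by rewrite gdist_self.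
by have := within_gdist x y; rewrite xy0 => /eqP.
Qed.

Hypothesis adj_sym : symmetric adj.

Lemma gdist_pred x y m :
  gdist adj x y = m.+1 -> exists2 z, adj y z & gdist adj x z = m.
Proof.
move=> xy; have /withinP [p xp /andP [/eqP py sp]] := within_gdist x y.
case/lastP: p xp py sp => [_ /= yx|p z]; first by move: xy; rewrite yx gdist_self.
rewrite rcons_path last_rcons size_rcons => /andP [xp pz] zy; subst z.
rewrite xy ltnS => sp; exists (last x p); first by rewrite adj_sym.
have pm : gdist adj x (last x p) <= m.
  by apply: gdist_le; apply/withinP; exists p; rewrite ?eqxx.
by have := gdist_adj x pz; rewrite xy; lia.
Qed.

Lemma gdist_between x w m : m <= gdist adj x w -> exists y, gdist adj x y = m.
Proof.
move En : (gdist adj x w) => n; elim: n w En => [|n IHn] w xw.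
  by rewrite leqn0 => /eqP ->; exists w.
rewrite leq_eqVlt ltnS => /orP [/eqP ->|mn]; first by exists w.
by have [z _ /IHn] := gdist_pred xw; apply.
Qed.

End Walks.

Definition feasible_array (D : nat) (a b c : nat -> nat) : Prop :=
  [/\ c 0 = 0, a 0 = 0 &
      forall j, 0 < j < D -> [/\ 0 < c j, 0 < b j & c j + a j + b j = b 0]].

Section DistanceRegular.
Variables (T : finType) (adj : rel T) (D : nat) (a b c : nat -> nat).
Hypothesis adj_drg : distance_regular adj D a b c.

Let adj_sym : symmetric adj. Proof. by case: adj_drg. Qed.
Let adj_irr : irreflexive adj. Proof. by case: adj_drg. Qed.
Let adj_connected : connected_graph adj. Proof. by case: adj_drg. Qed.

Lemma drg_valency x y :
  #|[set z | adj y z]| = c (gdist adj x y) + a (gdist adj x y) + b (gdist adj x y).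
Proof.
case: adj_drg => _ _ _ _ /(_ x y) /=; set i := gdist adj x y => -[<- <- <-].
have near z : adj y z -> i <= (gdist adj x z).+1 /\ gdist adj x z <= i.+1.
  by move=> yz; split; apply: gdist_adj; rewrite // adj_sym.
rewrite -(cardsID [set z | (gdist adj x z).+1 == i]).
rewrite -(cardsID [set z | gdist adj x z == i] (_ :\: _)) -addnA.
congr (_ + (_ + _)); apply: eq_card => z; rewrite !inE //;
  case yz: (adj y z); rewrite ?andbF ?andbT //=;
  have [] := near z yz; move: (gdist adj x z) => d; lia.
Qed.

Lemma drg_c0 (x : T) : c 0 = 0.
Proof.
case: adj_drg => _ _ _ _ /(_ x x); rewrite gdist_self => -[<- _ _].
by apply: eq_card0 => z; rewrite !inE andbF.
Qed.

Lemma drg_a0 (x : T) : a 0 = 0.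
Proof.
case: adj_drg => _ _ _ _ /(_ x x); rewrite gdist_self => -[_ <- _].
apply: eq_card0 => z; rewrite !inE gdist_eq0 //.
by case: eqP => [<-|]; rewrite ?adj_irr ?andbF.
Qed.

Lemma drg_step_pos x y m : gdist adj x y = m.+1 -> 0 < c m.+1 /\ 0 < b m.
Proof.
move=> xy; have [z yz xz] := gdist_pred adj_connected adj_sym xy.
case: adj_drg => _ _ _ _ drg_numbers; split.
  have /= := drg_numbers x y; rewrite xy => -[<- _ _].
  by apply/card_gt0P; exists z; rewrite !inE yz xz eqxx.
have /= := drg_numbers x z; rewrite xz => -[_ _ <-].
by apply/card_gt0P; exists y; rewrite !inE adj_sym yz xy eqxx.
Qed.

Lemma drg_feasible : 0 < D -> feasible_array D a b c.
Proof.
move=> D_gt0; have [x [w xw]] : exists x w, gdist adj x w = D.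
  by case: adj_drg => _ _ _ diamD _; rewrite -diamD; apply: diameter_witness; rewrite diamD.
split; [exact: drg_c0 x | exact: drg_a0 x |] => j /andP [j_gt0 jD].
have [y xy] : exists y, gdist adj x y = j.
  by apply: (gdist_between adj_connected adj_sym (w := w)); rewrite xw ltnW.
have [y' xy'] : exists y, gdist adj x y = j.+1.
  by apply: (gdist_between adj_connected adj_sym (w := w)); rewrite xw.
split; first by move: xy; rewrite -(prednK j_gt0) => /drg_step_pos [].
  by have [] := drg_step_pos xy'.
by rewrite -xy -drg_valency (drg_valency y) gdist_self (drg_c0 x) (drg_a0 x).
Qed.

End DistanceRegular.

Local Open Scope ring_scope.

Lemma plateau_product_identity (F : comPzRingType) (c d s r x y u v : F) :
  c * x + d * u = (c + d) * s * u ->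
  c * y + d * v = (c + d) * r * v ->
  c * (x * y) + d * (u * v) = (c + d) * (s * r) * (u * v) ->
  (c + d) * d * (s - 1) * (r - 1) * (u * v) = 0.
Proof.
(* Expand c^2 x y once as (c x) (c y) and once as c (c x y). *)
move=> eq_x eq_y eq_xy.
have -> : (c + d) * d * (s - 1) * (r - 1) * (u * v) =
  c * (c * (x * y) + d * (u * v) - (c + d) * (s * r) * (u * v))
  - (c * x + d * u - (c + d) * s * u) * (c * y + d * v - (c + d) * r * v)
  - (c * x + d * u - (c + d) * s * u) * ((c + d) * r - d) * v
  - (c * y + d * v - (c + d) * r * v) * ((c + d) * s - d) * u by ring.
by rewrite eq_x eq_y eq_xy !subrr; ring.
Qed.

Section PseudoCosine.
Variables (R : realType) (D : nat) (a b c : nat -> nat).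

Lemma eq_is_pseudo_cosine (s t : nat -> R) :
  s =1 t -> is_pseudo_cosine D a b c s -> is_pseudo_cosine D a b c t.
Proof.
move=> st [theta [s0 rec]]; exists theta; split=> [|i iD]; rewrite -!st //.
exact: rec.
Qed.

Lemma tight_pairC (s r : nat -> R) :
  tight_pair D a b c s r -> tight_pair D a b c r s.
Proof.
case=> ps pr psr; split=> //.
by apply: eq_is_pseudo_cosine psr => i; rewrite mulrC.
Qed.

Lemma auxiliary_parameterC (s r : nat -> R) eps :
  auxiliary_parameter D s r eps -> auxiliary_parameter D r s (- eps).
Proof.
move=> aux i iD; rewrite [r i * _]mulrC [r i.-1 * s i.-1]mulrC aux //; ring.
Qed.

Hypothesis feas : feasible_array D a b c.

Let k : R := (b 0)%:R.

Let feasibleR j : (0 < j < D)%N ->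
  [/\ 0 < (c j)%:R :> R, 0 <= (a j)%:R :> R, 0 < (b j)%:R :> R
    & (c j)%:R + (a j)%:R + (b j)%:R = k].
Proof.
case: feas => _ _ /[apply] -[cj bj kj].
by rewrite !ltr0n ler0n cj bj /k -kj !natrD.
Qed.

Lemma pseudo_cosine_theta (s : nat -> R) :
  is_pseudo_cosine D a b c s -> pseudo_cosine D a b c (k * s 1%N) s.
Proof.
case: feas => c0 a0 _ [theta [s0 rec]]; split=> // i iD.
have := rec 0%N (leq0n _); rewrite c0 a0 s0 !mul0r !add0r mulr1 => theta_eq.
by rewrite /k theta_eq; exact: rec.
Qed.

Lemma pseudo_cosine_next_neq0 (s : nat -> R) j :
  is_pseudo_cosine D a b c s -> (0 < j <= D)%N -> s j.-1 = 0 -> s j <> 0.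
Proof.
move=> /pseudo_cosine_theta [s0 rec]; elim: j => [//|[|j] IHj] jD /=.
  by rewrite s0 => /eqP; rewrite oner_eq0.
move=> sj sj1; apply: (IHj _ _ sj); first lia.
have [cj _ _ _] := feasibleR (j := j.+1) ltac:(lia).
have /eqP := rec j.+1 ltac:(lia).
by rewrite /= sj sj1 !mulr0 !addr0 mulf_eq0 (gt_eqF cj) => /eqP.
Qed.

Lemma pseudo_cosine_no_plateau (s : nat -> R) j :
  nontrivial s -> is_pseudo_cosine D a b c s -> (0 < j < D)%N ->
  s j.-1 = s j -> s j.+1 = s j -> False.
Proof.
move=> ns ps jD s_prev s_next; have [_ rec] := pseudo_cosine_theta ps.
have [cj aj bj kj] := feasibleR jD.
have sj0 : s j = 0.
  have rec_j := rec j ltac:(lia); rewrite /= s_prev s_next -!mulrDl kj in rec_j.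
  have : k * (s 1%N - 1) * s j = 0 by rewrite mulrBr mulr1 mulrBl -rec_j subrr.
  move/eqP; rewrite !mulf_eq0 subr_eq0 (introF eqP ns) orbF => /orP [|/eqP //].
  by rewrite -kj gt_eqF //; lra.
by apply: (pseudo_cosine_next_neq0 ps (j := j)); rewrite ?s_prev //; lia.
Qed.

Lemma pseudo_cosine_minus_one_next (s : nat -> R) :
  (0 < a 1)%N -> (1 < D)%N -> is_pseudo_cosine D a b c s -> s 1%N = -1 -> 1 < s 2%N.
Proof.
move=> a1 D2 /pseudo_cosine_theta [s0 rec] s1.
have [c1 _ b1 k1] := feasibleR (j := 1%N) ltac:(lia).
have a1R : 0 < (a 1%N)%:R :> R by rewrite ltr0n.
have := rec 1%N ltac:(lia); rewrite /= s0 s1 -k1; nra.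
Qed.

Lemma pseudo_cosine_minus_one_flip (s : nat -> R) :
  (2 < D)%N -> is_pseudo_cosine D a b c s -> s 1%N = -1 -> s 3%N = - s 2%N ->
  s 2%N <= 1.
Proof.
move=> D3 /pseudo_cosine_theta [_ rec] s1 s3.
have [c2 a2 _ k2] := feasibleR (j := 2%N) ltac:(lia).
have := rec 2%N ltac:(lia); rewrite /= s1 s3 -k2; nra.
Qed.

Lemma auxiliary_parameter_neq1 (s r : nat -> R) eps :
  (0 < a 1)%N -> (2 < D)%N -> nontrivial s ->
  is_pseudo_cosine D a b c s -> is_pseudo_cosine D a b c r ->
  auxiliary_parameter D s r eps -> eps <> 1.
Proof.
move=> a1 D3 ns ps pr aux eps1; rewrite {}eps1 in aux.
have step i : (0 < i <= D)%N -> (s i - s i.-1) * (r i + r i.-1) = 0.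
  move=> iD; have := aux i iD; rewrite mul1r => h.
  have -> : (s i - s i.-1) * (r i + r i.-1) =
    (s i * r i - s i.-1 * r i.-1) - (s i.-1 * r i - s i * r i.-1) by ring.
  by rewrite h subrr.
have [s0 _] := pseudo_cosine_theta ps.
have [r0 _] := pseudo_cosine_theta pr.
have r1 : r 1%N = -1.
  have /eqP := step 1%N ltac:(lia); rewrite /= s0 r0 mulf_eq0 subr_eq0.
  by rewrite (introF eqP ns) addr_eq0 => /eqP.
have r2 := pseudo_cosine_minus_one_next a1 (ltnW D3) pr r1.
have s21 : s 2%N = s 1%N.
  have /eqP := step 2%N ltac:(lia); rewrite /= mulf_eq0 subr_eq0 => /orP [/eqP //|].
  by rewrite r1 => /eqP; lra.
have /eqP := step 3%N ltac:(lia); rewrite /= mulf_eq0 subr_eq0 => /orP [/eqP s32|].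
  by apply: (pseudo_cosine_no_plateau (j := 2%N) ns ps) => //; lia.
rewrite addr_eq0 => /eqP /(pseudo_cosine_minus_one_flip D3 pr r1); lra.
Qed.

Lemma tight_pair_no_plateau (s r : nat -> R) j :
  tight_pair D a b c s r -> nontrivial s -> nontrivial r -> (0 < j < D)%N ->
  s j.+1 = s j -> r j.+1 = r j -> False.
Proof.
move=> [ps pr psr] ns nr jD s_eq r_eq.
have s_neq0 : s j != 0.
  by apply/eqP => sj0; apply: (pseudo_cosine_next_neq0 ps (j := j.+1)); rewrite /= ?s_eq //; lia.
have r_neq0 : r j != 0.
  by apply/eqP => rj0; apply: (pseudo_cosine_next_neq0 pr (j := j.+1)); rewrite /= ?r_eq //; lia.
have [cj aj bj kj] := feasibleR jD.
pose d : R := (a j)%:R + (b j)%:R.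
have plateau (t : nat -> R) : is_pseudo_cosine D a b c t -> t j.+1 = t j ->
    (c j)%:R * t j.-1 + d * t j = ((c j)%:R + d) * t 1%N * t j.
  move=> /pseudo_cosine_theta [_ rec] t_eq.
  by rewrite /d addrA kj -rec ?t_eq; [ring | lia].
have sr_eq : s j.+1 * r j.+1 = s j * r j by rewrite s_eq r_eq.
have /eqP := plateau_product_identity (plateau s ps s_eq) (plateau r pr r_eq)
  (plateau _ psr sr_eq).
rewrite !mulf_eq0 !subr_eq0 (introF eqP ns) (introF eqP nr) (negPf s_neq0) (negPf r_neq0).
by rewrite !gt_eqF // /d; lra.
Qed.

Lemma tight_pair_step_neq (s r : nat -> R) eps i :
  tight_pair D a b c s r -> nontrivial s -> nontrivial r ->
  auxiliary_parameter D s r eps -> eps <> 1 -> (0 < i <= D)%N -> s i.-1 <> s i.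
Proof.
move=> tp ns nr aux eps1; have [ps _ _] := tp.
case: i => [//|[|j]] iD /=.
  by have [s0 _] := pseudo_cosine_theta ps; rewrite s0 => s1; apply: ns.
move=> s_eq; apply: (tight_pair_no_plateau (j := j.+1) tp ns nr); [lia | by rewrite s_eq |].
have : (1 - eps) * s j.+1 * (r j.+2 - r j.+1) = 0.
  have := aux j.+2 iD; rewrite /= -s_eq => h.
  have -> : (1 - eps) * s j.+1 * (r j.+2 - r j.+1) =
    (s j.+1 * r j.+2 - s j.+1 * r j.+1) - eps * (s j.+1 * r j.+2 - s j.+1 * r j.+1) by ring.
  by rewrite {1}h subrr.
move/eqP; rewrite !mulf_eq0 subr_eq0 eq_sym (introF eqP eps1) /=.
case/orP => [/eqP sj0|]; last by rewrite subr_eq0 => /eqP.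
by exfalso; apply: (pseudo_cosine_next_neq0 ps (j := j.+2) iD); rewrite /= -?s_eq sj0.
Qed.

End PseudoCosine.

Theorem corollary8p6 (R : realType) (T : finType) (adj : rel T) (D : nat)
    (a b c : nat -> nat) (sigma rho : nat -> R) (eps : R) :
  distance_regular adj D a b c ->
  (3 <= D)%N ->
  a 1%N <> 0%N ->
  nontrivial sigma -> nontrivial rho ->
  tight_pair D a b c sigma rho ->
  auxiliary_parameter D sigma rho eps ->
  [/\ eps <> 1, eps <> -1 &
      forall i : nat, (1 <= i <= D)%N ->
        sigma i.-1 <> sigma i /\ rho i.-1 <> rho i].
Proof.
move=> drg D3 a1 ns nr tp aux.
have feas := drg_feasible drg (ltnW (ltnW D3)).
have a1_gt0 : (0 < a 1)%N by rewrite lt0n; apply/eqP.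
have [ps pr _] := tp; have tpC := tight_pairC tp; have auxC := auxiliary_parameterC aux.
have eps_neq1 := auxiliary_parameter_neq1 feas a1_gt0 D3 ns ps pr aux.
have eps_neqN1 : - eps <> 1 := auxiliary_parameter_neq1 feas a1_gt0 D3 nr pr ps auxC.
split; [by [] | by move=> epsN1; apply: eps_neqN1; rewrite epsN1 opprK |].
move=> i iD; split.
  exact (tight_pair_step_neq feas tp ns nr aux eps_neq1 iD).
exact (tight_pair_step_neq feas tpC nr ns auxC eps_neqN1 iD).
Qed.
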